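(* $\mathbf{CL7}$ proves (derives) every binary tautological $\to$-sequent.
   Context: $\to$-formulas are built from propositional atoms with binary $\to$; a $\to$-sequent is $\Gamma\Rightarrow F$ with $\Gamma$ a finite multiset of $\to$-formulas and $F$ a $\to$-formula. A sequent $E_1,\dots,E_n\Rightarrow F$ is tautological (resp. binary) if the classical formula $E_1\wedge\dots\wedge E_n\to F$ is a classical tautology (resp. has no atom occurring more than twice). $\mathbf{CL7}$ has axioms all sequents $\Gamma,F\Rightarrow F$ and exactly two rules: Right $\to$: from $\Gamma,E\Rightarrow F$ infer $\Gamma\Rightarrow E\to F$; Left $\to$: from $\Gamma,F\Rightarrow G$ and $\Delta\Rightarrow E$ infer $\Gamma,\Delta,E\to F\Rightarrow G$ (no contraction). *)

From Stdlib Require Import List Permutation Arith Bool.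
Import ListNotations.

Inductive form : Type :=
| Atom : nat -> form
| Imp : form -> form -> form.

(* Derivability in CL7 of the sequent  G => F, where the list G is read
   as a multiset (all rules are closed under permutation of antecedents). *)
Inductive CL7 : list form -> form -> Prop :=
| CL7_ax : forall G G' F,
    Permutation G' (F :: G) -> CL7 G' F
| CL7_R : forall G E F,
    CL7 (E :: G) F -> CL7 G (Imp E F)
| CL7_L : forall G D E F H G',
    CL7 (F :: G) H -> CL7 D E ->
    Permutation G' (Imp E F :: G ++ D) -> CL7 G' H.

Fixpoint eval (v : nat -> bool) (f : form) : bool :=
  match f with
  | Atom n => v n
  | Imp a b => implb (eval v a) (eval v b)
  end.

Definition tautological (G : list form) (F : form) : Prop :=
  forall v : nat -> bool,
    implb (forallb (eval v) G) (eval v F) = true.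

Fixpoint occ (a : nat) (f : form) : nat :=
  match f with
  | Atom n => if Nat.eqb n a then 1 else 0
  | Imp x y => occ a x + occ a y
  end.

Definition binary (G : list form) (F : form) : Prop :=
  forall a : nat, fold_right plus 0 (map (occ a) G) + occ a F <= 2.

From Stdlib Require Import List Permutation Arith Bool Lia.
Import ListNotations.

(* We show, by induction on the number of arrows, that every
   binary tautological sequent G => F has a CL7-derivable sub-sequent
   G' => F (G' a sub-multiset of G) which is moreover "paired-satisfiable":
   G' holds under every valuation making true the atoms that occur twice in
   G' => F.  Weakening then yields G => F itself.
   - For F = C -> D we extract from C, G => D and apply Right ->.
   - For F an atom a, tautology forces a hypothesis X with head a; binarity
     makes a private to X and the goal.  If X = a we use an axiom.  If
     X = A -> E, we first extract E, T => a from E, G; the atoms occurring twice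
     there do not occur in A nor in the rest R of G, so paired-satisfiability
     lets us discard T and keeps R => A tautological.  Extracting from R => A
     gives a context disjoint from T, and Left -> combines both derivations. *)

Lemma CL7_perm G F : CL7 G F -> forall G2, Permutation G G2 -> CL7 G2 F.
Proof.
  induction 1 as [G G' F Hp | G E F _ IH | G D E F H G' Hd1 _ Hd2 _ Hp]; intros G2 HP.
  - apply (CL7_ax G); eapply Permutation_trans; [apply Permutation_sym, HP | exact Hp].
  - apply CL7_R, IH, perm_skip, HP.
  - apply (CL7_L G D E F H G2 Hd1 Hd2).
    eapply Permutation_trans; [apply Permutation_sym, HP | exact Hp].
Qed.

Lemma CL7_weak G F : CL7 G F -> forall X, CL7 (X :: G) F.
Proof.
  induction 1 as [G G' F Hp | G E F _ IH | G D E F H G' _ IH1 Hd2 _ Hp]; intros X.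
  - apply (CL7_ax (X :: G)).
    eapply Permutation_trans; [apply perm_skip, Hp | apply perm_swap].
  - apply CL7_R, (CL7_perm _ _ (IH X)), perm_swap.
  - apply (CL7_L (X :: G) D E F); [apply (CL7_perm _ _ (IH1 X)), perm_swap | exact Hd2 |].
    eapply Permutation_trans; [apply perm_skip, Hp | apply perm_swap].
Qed.

Lemma CL7_weak_app B G F : CL7 G F -> CL7 (B ++ G) F.
Proof. induction B; simpl; auto using CL7_weak. Qed.

Definition total (f : form -> nat) (G : list form) : nat := list_sum (map f G).

Lemma total_cons f X G : total f (X :: G) = f X + total f G.
Proof. reflexivity. Qed.

Lemma total_app f G H : total f (G ++ H) = total f G + total f H.
Proof. unfold total; rewrite map_app; apply list_sum_app. Qed.

Lemma total_perm f G H : Permutation G H -> total f G = total f H.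
Proof. intros HP; apply Permutation_list_sum, Permutation_map, HP. Qed.

Notation occs a := (total (occ a)).

Lemma binary_perm G H F : Permutation G H -> binary G F -> binary H F.
Proof.
  intros HP Hb a; specialize (Hb a); change (occs a H + occ a F <= 2).
  rewrite <- (total_perm _ _ _ HP); exact Hb.
Qed.

Fixpoint imps (f : form) : nat :=
  match f with Atom _ => 0 | Imp A B => S (imps A + imps B) end.

Definition weight (G : list form) (F : form) : nat := total imps G + imps F.

Lemma eval_agree f v w : (forall b, occ b f <> 0 -> v b = w b) -> eval v f = eval w f.
Proof.
  induction f as [n | A IHA B IHB]; simpl; intros Hvw.
  - apply Hvw; simpl; rewrite Nat.eqb_refl; discriminate.
  - rewrite IHA, IHB by (intros b Hb; apply Hvw; lia); reflexivity.
Qed.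

Lemma forallb_agree G v w :
  (forall b, occs b G <> 0 -> v b = w b) -> forallb (eval v) G = forallb (eval w) G.
Proof.
  induction G as [|X G IH]; simpl; intros Hvw; [reflexivity|].
  rewrite (eval_agree X v w), IH; [reflexivity| |];
    intros b Hb; apply Hvw; rewrite total_cons; lia.
Qed.

Lemma forallb_perm {T : Type} (p : T -> bool) G H :
  Permutation G H -> forallb p G = forallb p H.
Proof.
  intros HP; induction HP; simpl; try congruence.
  destruct (p x), (p y); reflexivity.
Qed.

Lemma taut_perm G H F : Permutation G H -> tautological G F -> tautological H F.
Proof. intros HP Ht v; rewrite <- (forallb_perm _ _ _ HP); apply Ht. Qed.

(* The head of A1 -> ... -> An -> b is the atom b: making it true makes the
   formula true, so a tautology with atomic goal a has a hypothesis headed by a. *)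
Fixpoint head (f : form) : nat :=
  match f with Atom n => n | Imp _ B => head B end.

Lemma occ_head f : 1 <= occ (head f) f.
Proof. induction f; simpl; [rewrite Nat.eqb_refl|]; lia. Qed.

Lemma eval_head f v : v (head f) = true -> eval v f = true.
Proof.
  induction f as [n | A _ B IHB]; simpl; intros Hv; [exact Hv|].
  rewrite IHB by exact Hv; apply implb_true_r.
Qed.

Lemma taut_has_head G a :
  tautological G (Atom a) -> exists X G0, Permutation G (X :: G0) /\ head X = a.
Proof.
  intros Ht.
  destruct (existsb (fun X => head X =? a) G) eqn:Hex.
  - apply existsb_exists in Hex as [X [HX Hh]]; apply Nat.eqb_eq in Hh.
    destruct (in_split _ _ HX) as [G1 [G2 ->]].
    exists X, (G1 ++ G2); split; [apply Permutation_sym, Permutation_middle | exact Hh].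
  - exfalso. specialize (Ht (fun b => negb (b =? a))); simpl in Ht.
    rewrite Nat.eqb_refl in Ht.
    assert (Hall : forallb (eval (fun b => negb (b =? a))) G = true).
    { apply forallb_forall; intros X HX; apply eval_head.
      destruct (head X =? a) eqn:Hh; [|reflexivity].
      enough (existsb (fun X => head X =? a) G = true) by congruence.
      apply existsb_exists; eauto. }
    rewrite Hall in Ht; discriminate.
Qed.

(* Tautologies of the premises of Right -> and Left -> (the latter needs the
   goal atom to be absent from A and G, since a is falsified). *)
Lemma taut_right G C D : tautological G (Imp C D) -> tautological (C :: G) D.
Proof.
  intros Ht v; specialize (Ht v); simpl in *.
  destruct (eval v C), (forallb (eval v) G), (eval v D); auto.
Qed.

Lemma taut_left_conclusion A E G F :
  tautological (Imp A E :: G) F -> tautological (E :: G) F.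
Proof.
  intros Ht v; specialize (Ht v); simpl in *.
  destruct (eval v A), (eval v E), (forallb (eval v) G), (eval v F); auto.
Qed.

Lemma taut_left_premise A E G a :
  occ a A = 0 -> occs a G = 0 ->
  tautological (Imp A E :: G) (Atom a) -> tautological G A.
Proof.
  intros HA HG Ht v.
  set (w := fun b => if b =? a then false else v b).
  assert (Hagree : forall b, b <> a -> w b = v b)
    by (intros b Hb; unfold w; destruct (Nat.eqb_spec b a); congruence).
  specialize (Ht w); simpl in Ht.
  replace (w a) with false in Ht by (unfold w; rewrite Nat.eqb_refl; reflexivity).
  rewrite (eval_agree A w v), (forallb_agree G w v) in Ht;
    [| intros b Hb; apply Hagree; intros ->; contradiction ..].
  destruct (eval v A), (eval w E), (forallb (eval v) G); auto.
Qed.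

(* This invariant of extracted derivations is what allows
   the two premises of Left -> to be given disjoint contexts. *)
Definition paired_sat (G : list form) (F : form) : Prop :=
  forall v, (forall b, 2 <= occs b G + occ b F -> v b = true) ->
  forallb (eval v) G = true.

Lemma taut_drop_private T R A (p : nat -> bool) :
  tautological (T ++ R) A ->
  (forall v, (forall b, p b = true -> v b = true) -> forallb (eval v) T = true) ->
  (forall b, p b = true -> occs b R = 0 /\ occ b A = 0) ->
  tautological R A.
Proof.
  intros Ht HT Hpriv v.
  set (w := fun b => p b || v b).
  assert (Hagree : forall b, p b = false -> w b = v b)
    by (intros b Hb; unfold w; rewrite Hb; reflexivity).
  specialize (Ht w); rewrite forallb_app, (HT w) in Ht
    by (intros b Hb; unfold w; rewrite Hb; reflexivity).
  rewrite (forallb_agree R w v), (eval_agree A w v) in Ht;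
    [exact Ht | intros b Hb; apply Hagree; destruct (p b) eqn:Hp; [|reflexivity];
       exfalso; apply Hb, (Hpriv b Hp) ..].
Qed.

Lemma perm_cons_split {T : Type} (x : T) l m r :
  Permutation (x :: l) (m ++ r) ->
  (exists m', Permutation m (x :: m') /\ Permutation l (m' ++ r)) \/
  (exists r', Permutation r (x :: r') /\ Permutation l (m ++ r')).
Proof.
  intros HP.
  assert (Hin : In x (m ++ r)) by (eapply Permutation_in; [exact HP | left; reflexivity]).
  apply in_app_or in Hin as [Hin | Hin]; destruct (in_split _ _ Hin) as [l1 [l2 ->]].
  - left; exists (l1 ++ l2); split; [apply Permutation_sym, Permutation_middle|].
    rewrite <- app_assoc; apply Permutation_cons_app_inv with x.
    rewrite <- app_assoc in HP; exact HP.
  - right; exists (l1 ++ l2); split; [apply Permutation_sym, Permutation_middle|].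
    rewrite app_assoc; apply Permutation_cons_app_inv with x.
    rewrite <- app_assoc; exact HP.
Qed.

Definition extractable (G : list form) (F : form) : Prop :=
  exists G' R, Permutation G (G' ++ R) /\ CL7 G' F /\ paired_sat G' F.

Lemma extractable_perm G H F : Permutation G H -> extractable G F -> extractable H F.
Proof.
  intros HP [G' [R [HG HR]]]; exists G', R; split; [|exact HR].
  eapply Permutation_trans; [apply Permutation_sym, HP | exact HG].
Qed.

Lemma extract_axiom a G : extractable (Atom a :: G) (Atom a).
Proof.
  exists [Atom a], G; split; [reflexivity | split].
  - apply (CL7_ax []); reflexivity.
  - intros v Hv; simpl; rewrite Hv; [reflexivity|].
    rewrite total_cons; simpl; rewrite Nat.eqb_refl; lia.
Qed.

(* Right -> case: the hypothesis C is added back to the context if unused. *)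
Lemma extract_right C D G : extractable (C :: G) D -> extractable G (Imp C D).
Proof.
  intros [G'' [R [HP [Hd Hs]]]].
  destruct (perm_cons_split _ _ _ _ HP) as [[G' [HG'' HG]] | [R' [_ HG]]].
  - exists G', R; split; [exact HG | split].
    + apply CL7_R, (CL7_perm _ _ Hd _ HG'').
    + intros v Hv.
      assert (HG''v : forallb (eval v) G'' = true).
      { apply Hs; intros b Hb; apply Hv.
        rewrite (total_perm _ _ _ HG''), total_cons in Hb; simpl; lia. }
      rewrite (forallb_perm _ _ _ HG'') in HG''v; simpl in HG''v.
      apply andb_prop in HG''v as [_ HG'v]; exact HG'v.
  - exists G'', R'; split; [exact HG | split].
    + apply CL7_R, CL7_weak, Hd.
    + intros v Hv; apply Hs; intros b Hb; apply Hv; simpl; lia.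
Qed.

(* Left -> case for a hypothesis A -> E whose head a is the goal: extract from
   E, G => a, then from the part of G left unused, which still proves A. *)
Lemma extract_left A E G a :
  binary (Imp A E :: G) (Atom a) ->
  tautological G A ->
  extractable (E :: G) (Atom a) ->
  (forall T R, Permutation G (T ++ R) -> tautological R A -> extractable R A) ->
  extractable (Imp A E :: G) (Atom a).
Proof.
  intros Hbin HtA [Th [R1 [HP [HdE HsE]]]] IHA.
  destruct (perm_cons_split _ _ _ _ HP) as [[Th0 [HTh HG]] | [R1' [_ HG]]].
  2:{ exists Th, (Imp A E :: R1'); split; [| split; assumption].
      eapply Permutation_trans; [apply perm_skip, HG | apply Permutation_middle]. }
  set (p := fun b => 2 <=? occs b Th + occ b (Atom a)).
  assert (HR1A : tautological R1 A).
  { apply (taut_drop_private Th0 R1 A p).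
    - apply (taut_perm _ _ _ HG HtA).
    - intros v Hv.
      assert (HThv : forallb (eval v) Th = true)
        by (apply HsE; intros b Hb; apply Hv; apply Nat.leb_le, Hb).
      rewrite (forallb_perm _ _ _ HTh) in HThv; simpl in HThv.
      apply andb_prop in HThv as [_ HTh0v]; exact HTh0v.
    - intros b Hb; apply Nat.leb_le in Hb.
      specialize (Hbin b); change (occs b (Imp A E :: G) + occ b (Atom a) <= 2) in Hbin.
      rewrite total_cons, (total_perm _ _ _ HG), total_app in Hbin.
      rewrite (total_perm _ _ _ HTh), total_cons in Hb; simpl in Hbin, Hb; lia. }
  destruct (IHA Th0 R1 HG HR1A) as [Dl [R2 [HPD [HdD HsD]]]].
  exists (Imp A E :: Th0 ++ Dl), R2; split; [| split].
  - simpl; apply perm_skip; rewrite <- app_assoc.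
    eapply Permutation_trans; [exact HG | apply Permutation_app_head, HPD].
  - apply CL7_L with (G := Th0) (D := Dl) (E := A) (F := E); [| exact HdD | reflexivity].
    apply (CL7_perm _ _ HdE _ HTh).
  - intros v Hv.
    assert (Hcount : forall b, occs b (Imp A E :: Th0 ++ Dl) + occ b (Atom a)
                      = occ b A + (occs b Th + occ b (Atom a)) + occs b Dl).
    { intros b; rewrite (total_perm _ _ _ HTh), !total_cons, total_app; simpl; lia. }
    assert (HThv : forallb (eval v) Th = true)
      by (apply HsE; intros b Hb; apply Hv; rewrite Hcount; lia).
    assert (HDv : forallb (eval v) Dl = true)
      by (apply HsD; intros b Hb; apply Hv; rewrite Hcount; simpl; lia).
    rewrite (forallb_perm _ _ _ HTh) in HThv; simpl in HThv |- *.
    apply andb_prop in HThv as [HEv HTh0v].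
    rewrite forallb_app, HEv, HTh0v, HDv, implb_true_r; reflexivity.
Qed.

Lemma extract n G F :
  weight G F < n -> binary G F -> tautological G F -> extractable G F.
Proof.
  revert G F; induction n as [|n IH]; intros G F Hw Hbin Ht; [lia|].
  destruct F as [a | C D].
  - destruct (taut_has_head _ _ Ht) as [X [G0 [HG Hhead]]].
    apply (extractable_perm (X :: G0)); [apply Permutation_sym, HG|].
    apply (binary_perm _ _ _ HG) in Hbin; apply (taut_perm _ _ _ HG) in Ht.
    unfold weight in Hw; rewrite (total_perm _ _ _ HG) in Hw.
    destruct X as [b | A E]; simpl in Hhead; [subst b; apply extract_axiom|].
    assert (Hcount : forall b, occs b (Imp A E :: G0) + occ b (Atom a) <= 2) by exact Hbin.
    assert (Ha := Hcount a); pose proof (occ_head E) as HE; rewrite Hhead in HE.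
    rewrite total_cons in Ha; simpl in Ha; rewrite Nat.eqb_refl in Ha.
    apply extract_left; [exact Hbin | apply (taut_left_premise A E G0 a); auto; lia | |].
    + apply IH; [unfold weight; rewrite !total_cons in *; simpl in *; lia | |
                 apply (taut_left_conclusion A), Ht].
      intros b; specialize (Hcount b); change (occs b (E :: G0) + occ b (Atom a) <= 2).
      rewrite total_cons in *; simpl in *; lia.
    + intros T R HT HtR; apply IH; [| | exact HtR].
      * unfold weight; rewrite total_cons, (total_perm _ _ _ HT), total_app in Hw.
        simpl in Hw; lia.
      * intros b; specialize (Hcount b); change (occs b R + occ b A <= 2).
        rewrite total_cons, (total_perm _ _ _ HT), total_app in Hcount; simpl in Hcount; lia.
  - apply extract_right, IH; [unfold weight in *; rewrite total_cons; simpl in *; lia | |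
                               apply taut_right, Ht].
    intros b; specialize (Hbin b); change (occs b (C :: G) + occ b D <= 2).
    change (occs b G + occ b (Imp C D) <= 2) in Hbin; rewrite total_cons; simpl in Hbin; lia.
Qed.

Theorem lemma4p3 (G : list form) (F : form) :
  binary G F -> tautological G F -> CL7 G F.
Proof.
  intros Hbin Ht.
  destruct (extract (S (weight G F)) G F (Nat.lt_succ_diag_r _) Hbin Ht)
    as [G' [R [HP [Hd _]]]].
  apply (CL7_perm (R ++ G')); [apply CL7_weak_app, Hd|].
  eapply Permutation_trans; [apply Permutation_app_comm | apply Permutation_sym, HP].
Qed.
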